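(* Let $r>0$, and let $(X_i,x_i,d_i)_{i\in\mathbb{Z}^+}$ be pointed metric spaces. Suppose that for each $i$ the $r$-neighborhood $U_i=\{y\in X_i: d_i(y,x_i)<r\}$ admits a strong deformation contraction $R_i$ to $x_i$, where $U_i$ is equipped with the restricted metric $d_i$. Then for every pointed compact space $(K,k_0)$, the natural continuous bijection $\bigvee_{\mathbb{Z}^+}X_i\to\bigvee^m_{\mathbb{Z}^+}X_i$ induces a bijection between the sets of pointed homotopy classes of pointed maps $[K,\bigvee_{\mathbb{Z}^+}X_i]$ and $[K,\bigvee^m_{\mathbb{Z}^+}X_i]$.
   Context: Let $I=[0,1]$. A strong deformation contraction of a pointed metric space $(X,x_0,d)$ to $x_0$ is a continuous map $H\colon X\times I\to X$ such that: (1) $H(x,0)=x$ for all $x$; (2) $H(X\times\{1\})=H(\{x_0\}\times I)=\{x_0\}$; (3) $d(H(x,t),H(y,t))\le d(x,y)$ for all $x,y\in X$ and all $t\in I$. The weak wedge $\bigvee_{\mathbb{Z}^+}X_i$ is the quotient space of the disjoint union of the $X_i$ obtained by identifying all the points $x_i$. It is based at the wedge point. The metric wedge $\bigvee^m_{\mathbb{Z}^+}X_i$ is the same set, based at the wedge point, with the metric $d_\vee$ given by: - $d_\vee(x,y)=d_j(x,y)$ if $x,y\in X_j$ for some $j$; - $d_\vee(x,y)=d_j(x,x_j)+d_k(y,x_k)$ if $x\in X_j$, $y\in X_k$ with $j\ne k$. *)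

From HB Require Import structures.
From mathcomp Require Import all_boot all_order all_algebra generic_quotient.
From mathcomp Require Import all_classical all_reals topology wedge_sigT.
From mathcomp Require Import lra.

Set Implicit Arguments.
Unset Strict Implicit.
Unset Printing Implicit Defensive.
Import Order.TTheory GRing.Theory Num.Theory.
Import numFieldTopology.Exports.
Local Open Scope classical_set_scope.
Local Open Scope ring_scope.
Local Open Scope quotient_scope.

Section metric_wedge.
Context {R : realType} (X : nat -> metricType R) (x0 : forall i, X i).

Definition sigT_wdist (p q : {i : nat & X i}) : R :=
  if tag p == tag q then mdist (tagged p) (tagged_as p q)
  else mdist (tagged p) (x0 (tag p)) + mdist (tagged q) (x0 (tag q)).

Lemma sigT_wdistE i (u v : X i) :
  sigT_wdist (existT X i u) (existT X i v) = mdist u v.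
Proof. by rewrite /sigT_wdist /= eqxx (@tagged_asE _ X (existT X i u) v). Qed.

Lemma sigT_wdistNE i j (u : X i) (v : X j) : i != j ->
  sigT_wdist (existT X i u) (existT X j v) = mdist u (x0 i) + mdist v (x0 j).
Proof. by move=> ij; rewrite /sigT_wdist /= (negbTE ij). Qed.

Lemma sigT_wdist_base i q :
  sigT_wdist (existT X i (x0 i)) q = mdist (tagged q) (x0 (tag q)).
Proof.
case: q => j v /=; case: (eqVneq i j) => [eij|ij]; first subst j.
  by rewrite sigT_wdistE metric_sym.
by rewrite sigT_wdistNE // mdistxx add0r.
Qed.

Lemma sigT_wdist_sym p q : sigT_wdist p q = sigT_wdist q p.
Proof.
case: p q => i u [j v]; case: (eqVneq i j) => [eij|ij]; first subst j.
  by rewrite !sigT_wdistE metric_sym.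
rewrite sigT_wdistNE // sigT_wdistNE 1?eq_sym //; exact: addrC.
Qed.

Lemma sigT_wdist_ge0 p q : 0 <= sigT_wdist p q.
Proof.
case: p q => i u [j v]; case: (eqVneq i j) => [eij|ij]; first subst j.
  by rewrite sigT_wdistE mdist_ge0.
by rewrite sigT_wdistNE // addr_ge0 // mdist_ge0.
Qed.

Lemma sigT_wdist_compat p p' q : wedge_rel x0 p p' ->
  sigT_wdist p q = sigT_wdist p' q.
Proof.
case/orP => [/eqP -> //|/andP [/eqP hp /eqP hp']].
case: p hp => i u /= ->; case: p' hp' => j v /= ->.
by rewrite !sigT_wdist_base.
Qed.

Lemma sigT_wdist_triangle p q s :
  sigT_wdist p s <= sigT_wdist p q + sigT_wdist q s.
Proof.
case: p q s => i u [j v] [k w].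
have h0 := @mdist_ge0 R.
case: (eqVneq i j) => [eij|ij]; case: (eqVneq i k) => [eik|ik]; try subst j; try subst k.
- by rewrite !sigT_wdistE metric_triangle.
- rewrite sigT_wdistE !sigT_wdistNE //.
  have := metric_triangle u v (x0 i); have := h0 _ u v; lra.
- rewrite sigT_wdistE sigT_wdistNE // sigT_wdistNE 1?eq_sym //.
  have := metric_triangle u (x0 i) w.
  rewrite (metric_sym w); have := h0 _ v (x0 j); lra.
- case: (eqVneq j k) => [jk|jk].
    subst k; rewrite sigT_wdistE !sigT_wdistNE //.
    have := metric_triangle w v (x0 j); rewrite (metric_sym w v).
    have := h0 _ u (x0 i); lra.
  rewrite !sigT_wdistNE //.
  have := h0 _ v (x0 j); have := h0 _ u (x0 i); have := h0 _ w (x0 k); lra.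
Qed.

Lemma sigT_wdist_eq0 p q : sigT_wdist p q = 0 -> wedge_rel x0 p q.
Proof.
case: p q => i u [j v]; case: (eqVneq i j) => [eij|ij]; first subst j.
  by rewrite sigT_wdistE => /mdist_positivity ->; apply/orP; left.
rewrite sigT_wdistNE // => /eqP; rewrite paddr_eq0 ?mdist_ge0 //.
case/andP => /eqP/mdist_positivity hu /eqP/mdist_positivity hv.
by apply/orP; right; rewrite /= hu hv !eqxx.
Qed.

Definition mwedge := wedge x0.
HB.instance Definition _ := Choice.on mwedge.

Definition wedge_dist (a b : mwedge) : R := sigT_wdist (repr a) (repr b).

Lemma wedge_distE p q :
  wedge_dist (\pi_(wedge x0) p) (\pi_(wedge x0) q) = sigT_wdist p q.
Proof.
rewrite /wedge_dist.
have hp : wedge_rel x0 (repr (\pi_(wedge x0) p)) p.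
  by apply/eqmodP; rewrite reprK.
have hq : wedge_rel x0 (repr (\pi_(wedge x0) q)) q.
  by apply/eqmodP; rewrite reprK.
rewrite (sigT_wdist_compat _ hp) sigT_wdist_sym (sigT_wdist_compat _ hq).
by rewrite sigT_wdist_sym.
Qed.

Lemma wedge_distxx a : wedge_dist a a = 0.
Proof.
by rewrite /wedge_dist; case: (repr a) => i u; rewrite sigT_wdistE mdistxx.
Qed.

Lemma wedge_dist_sym a b : wedge_dist a b = wedge_dist b a.
Proof. exact: sigT_wdist_sym. Qed.

Lemma wedge_dist_triangle b a c :
  wedge_dist a c <= wedge_dist a b + wedge_dist b c.
Proof. exact: sigT_wdist_triangle. Qed.

Lemma wedge_dist_positivity a b : wedge_dist a b = 0 -> a = b.
Proof.
move=> /sigT_wdist_eq0 h.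
by rewrite -[a]reprK -[b]reprK; apply/eqmodP.
Qed.

HB.instance Definition _ := @isMetric.Build R mwedge wedge_dist
  wedge_distxx wedge_dist_positivity wedge_dist_sym wedge_dist_triangle.

End metric_wedge.

Section wedge_maps.
Context {R : realType} (X : nat -> metricType R) (x0 : forall i, X i).

(** the weak wedge [wedge x0] (quotient topology of the disjoint union) and
    the metric wedge [mwedge x0] have the same underlying set; the natural
    continuous bijection is the identity map *)
Definition wedge_to_mwedge : wedge x0 -> mwedge x0 := fun w => w.

Definition wedge_pt : wedge x0 := wedge_lift x0 (x0 0%N).
Definition mwedge_pt : mwedge x0 := wedge_to_mwedge wedge_pt.

End wedge_maps.
Arguments wedge_to_mwedge {R X} x0 _.
Arguments wedge_pt {R X} x0.
Arguments mwedge_pt {R X} x0.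
Arguments mwedge {R X} x0.

Definition pointed_map (K Y : topologicalType) (k0 : K) (y0 : Y) (f : K -> Y) :=
  continuous f /\ f k0 = y0.

Definition pointed_homotopic {R : realType} (K Y : topologicalType)
    (k0 : K) (y0 : Y) (f g : K -> Y) :=
  exists H : K * R -> Y,
    {within [set p : K * R | 0 <= p.2 <= 1], continuous H} /\
    (forall k, H (k, 0) = f k) /\
    (forall k, H (k, 1) = g k) /\
    (forall t, 0 <= t <= 1 -> H (k0, t) = y0).

(** strong deformation contraction of the pointed metric space (U, x0, d|U),
    where U is a subset of the metric space X containing x0; the homotopy is a
    map U x I -> U, represented as a map X * R -> X whose values matter only
    on U x [0,1] *)
Definition strong_deformation_contraction {R : realType} (X : metricType R)
    (x0 : X) (U : set X) (H : X * R -> X) :=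
  {within [set p : X * R | U p.1 /\ 0 <= p.2 <= 1], continuous H} /\
  (forall x t, U x -> 0 <= t <= 1 -> U (H (x, t))) /\
  (forall x, U x -> H (x, 0) = x) /\
  (forall x, U x -> H (x, 1) = x0) /\
  (forall t, 0 <= t <= 1 -> H (x0, t) = x0) /\
  (forall x y t, U x -> U y -> 0 <= t <= 1 ->
     mdist (H (x, t)) (H (y, t)) <= mdist x y).

From HB Require Import structures.
From mathcomp Require Import all_boot all_order all_algebra generic_quotient.
From mathcomp Require Import all_classical all_reals topology wedge_sigT.
From mathcomp Require Import normedtype finmap lra.

Import Order.TTheory GRing.Theory Num.Theory.
Import numFieldTopology.Exports numFieldNormedType.Exports metricType_numDomainType.
Local Open Scope classical_set_scope.
Local Open Scope ring_scope.
Local Open Scope quotient_scope.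
Set Implicit Arguments.
Unset Strict Implicit.

(* The identity map from the weak wedge to the metric wedge is continuous,
   and the two topologies agree on every finite sub-wedge, i.e. on the union
   of finitely many summands.

   Injectivity on homotopy classes: a compact subset of the weak wedge lies in
   a finite sub-wedge, because choosing one point other than the wedge point in
   each summand gives a closed discrete set.  Collapsing all summands beyond
   the N-th to the wedge point is a 1-Lipschitz retraction of the metric wedge
   onto a finite sub-wedge, so it turns a homotopy in the metric wedge between
   two maps into the weak wedge into a homotopy in the weak wedge.

   Surjectivity: a compact subset of the metric wedge meets all but finitely
   many summands inside the r-ball around the wedge point.  Running the
   contractions R_i on those summands deforms any pointed map into a map with
   values in a finite sub-wedge; since every R_i is 1-Lipschitz and fixes x_i,
   this deformation is continuous at the wedge point uniformly in i. *)

Section metric_nbhs.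
Context {R : realType} (Y : metricType R).

Lemma nbhs_mdist_ballP (x : Y) (A : set Y) :
  nbhs x A <-> exists2 e : R, 0 < e & forall y, mdist x y < e -> A y.
Proof.
rewrite -filter_from_mdist_nbhs.
by split => -[e e0 h]; exists e.
Qed.

Lemma open_mdist (A : set Y) :
  (forall x, A x -> exists2 e : R, 0 < e & forall y, mdist x y < e -> A y) ->
  open A.
Proof. by move=> h; rewrite openE => x /h /nbhs_mdist_ballP. Qed.

Lemma mdist_le_continuous (Z : metricType R) (f : Y -> Z) :
  (forall y y', mdist (f y) (f y') <= mdist y y') -> continuous f.
Proof.
move=> f_le y; apply/cvgrPdist_lt => e e0; apply/nbhs_mdist_ballP.
by exists e => // y'; exact: le_lt_trans (f_le y y').
Qed.

End metric_nbhs.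

(* [compact_cover] is stated for pointed spaces only *)
Definition pointed_at (T : topologicalType) (x : T) : Type := T.
HB.instance Definition _ (T : topologicalType) (x : T) :=
  Topological.on (pointed_at x).
HB.instance Definition _ (T : topologicalType) (x : T) :=
  isPointed.Build (pointed_at x) x.

Lemma compact_increasing_cover (T : topologicalType) (A : set T)
    (O : nat -> set T) :
  compact A -> (forall n, open (O n)) ->
  (forall n m, (n <= m)%N -> O n `<=` O m) ->
  A `<=` \bigcup_n O n -> exists N, A `<=` O N.
Proof.
move=> cA oO homoO AO; have [->|/set0P[a _]] := eqVneq A set0; first by exists 0%N.
have : @cover_compact (pointed_at a) A by rewrite -compact_cover.
move=> /(_ nat [set: nat] O (fun n _ => oO n)) [|D _ AD].
  by move=> x /AO [n _ On]; exists n.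
exists (\max_(n <- D) n) => x /AD [n /= Dn On].
by apply: homoO On; apply: (@leq_bigmax_seq _ _ xpredT id).
Qed.

Section mwedge_lift.
Context {R : realType} (X : nat -> metricType R) (x0 : forall i, X i).
Local Notation M := (mwedge x0).
Local Notation pt := (mwedge_pt x0).

Definition mwedge_lift i (u : X i) : M := wedge_lift x0 u.

Lemma mwedge_lift_pt i : mwedge_lift (x0 i) = pt.
Proof. exact: (wedge_liftE x0 (x0 0%N) (x0 i)). Qed.

Lemma mwedge_liftP (m : M) : exists i (u : X i), m = mwedge_lift u.
Proof.
case E: (repr m) => [i u]; exists i, u.
by rewrite /mwedge_lift /wedge_lift /= -E reprK.
Qed.

Lemma mdist_mwedge_lift i (u v : X i) :
  mdist (mwedge_lift u) (mwedge_lift v) = mdist u v.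
Proof. by rewrite [LHS]wedge_distE sigT_wdistE. Qed.

Lemma mdist_mwedge_liftNE i j (u : X i) (v : X j) : i != j ->
  mdist (mwedge_lift u) (mwedge_lift v) = mdist u (x0 i) + mdist v (x0 j).
Proof. by move=> ij; rewrite [LHS]wedge_distE sigT_wdistNE. Qed.

Lemma mdist_mwedge_lift_pt i (u : X i) :
  mdist (mwedge_lift u) pt = mdist u (x0 i).
Proof. by rewrite -(mwedge_lift_pt i) mdist_mwedge_lift. Qed.

Lemma mwedge_lift_inj i : injective (@mwedge_lift i).
Proof.
move=> u v e; apply: mdist_positivity.
by rewrite -mdist_mwedge_lift e mdistxx.
Qed.

Lemma mwedge_lift_eqNE i j (u : X i) (v : X j) : i != j ->
  mwedge_lift u = mwedge_lift v -> u = x0 i /\ v = x0 j.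
Proof.
move=> ij e; have : mdist (mwedge_lift u) (mwedge_lift v) = 0.
  by rewrite e mdistxx.
rewrite mdist_mwedge_liftNE // => /eqP; rewrite paddr_eq0 ?mdist_ge0 //.
by case/andP => /eqP/mdist_positivity -> /eqP/mdist_positivity ->.
Qed.

Lemma mwedge_lift_ball i (u : X i) (m : M) :
  mdist (mwedge_lift u) m < mdist u (x0 i) -> exists w : X i, m = mwedge_lift w.
Proof.
have [j [w ->]] := mwedge_liftP m; move: w.
have [<- w|ij w] := eqVneq i j; first by exists w.
rewrite mdist_mwedge_liftNE // => h; have := mdist_ge0 w (x0 j); lra.
Qed.

Lemma repr_mwedge_lift i (u : X i) : u != x0 i ->
  repr (mwedge_lift u) = existT X i u.
Proof.
move=> ux0; have /eqmodP : \pi_(wedge x0) (repr (mwedge_lift u)) =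
  \pi_(wedge x0) (existT X i u) := reprK _.
by case/orP => [/eqP //|/andP [_ /eqP /= ux0']]; rewrite ux0' eqxx in ux0.
Qed.

Lemma repr_mwedge_pt : exists j, repr pt = existT X j (x0 j).
Proof.
case E: (repr pt) => [j v]; exists j; congr existT.
by apply: mwedge_lift_inj; rewrite mwedge_lift_pt -[RHS]reprK E.
Qed.

End mwedge_lift.

Section finite_subwedge.
Context {R : realType} (X : nat -> metricType R) (x0 : forall i, X i).
Local Notation W := (wedge x0).
Local Notation M := (mwedge x0).
Local Notation pt := (mwedge_pt x0).
Local Notation lift := (mwedge_lift x0).

Definition subwedge N : set M :=
  [set m | exists i (u : X i), (i <= N)%N /\ m = lift u].

Lemma subwedge_pt N : subwedge N pt.
Proof. by exists 0%N, (x0 0%N); rewrite mwedge_lift_pt. Qed.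

Lemma subwedgeS N N' : (N <= N')%N -> subwedge N `<=` subwedge N'.
Proof. by move=> NN' m [i [u [iN ->]]]; exists i, u; rewrite (leq_trans iN). Qed.

Definition mwedge_to_wedge (m : M) : W := m.

Lemma continuous_mwedge_lift i : continuous (@mwedge_lift _ _ x0 i).
Proof. by apply: mdist_le_continuous => u v; rewrite mdist_mwedge_lift. Qed.

Lemma continuous_wedge_to_mwedge : continuous (wedge_to_mwedge x0).
Proof.
have -> : wedge_to_mwedge x0 = wedge_fun (fun i (u : X i) => lift u).
  apply/funext => z; rewrite /wedge_fun /=; case E: (repr z) => [i u] /=.
  by rewrite /wedge_to_mwedge -{1}[z]reprK E.
apply: wedge_fun_continuous => [i|i j]; first exact: continuous_mwedge_lift.
by rewrite !mwedge_lift_pt.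
Qed.

(* a minimum of summand-wise radii is positive only over finitely many
   summands: this is where the restriction to a finite sub-wedge is needed *)
Lemma open_wedge_ball_pt (V : set W) : open V -> V pt ->
  forall N, exists2 e : R, 0 < e &
    forall j (y : X j), (j <= N)%N -> mdist (x0 j) y < e -> V (lift y).
Proof.
move=> oV Vpt; have ball_j j : exists2 e : R, 0 < e &
    forall y : X j, mdist (x0 j) y < e -> V (lift y).
  apply/nbhs_mdist_ballP/open_nbhs_nbhs; split; first exact: (wedge_openP V).1 oV j.
  by change (V (lift (x0 j))); rewrite mwedge_lift_pt.
elim=> [|N [e e0 He]].
  have [e e0 He] := ball_j 0%N; exists e => // j y.
  by rewrite leqn0 => /eqP j0; subst j; exact: He.
have [e' e'0 He'] := ball_j N.+1.
exists (Order.min e e'); first by rewrite lt_min e0.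
move=> j y; rewrite leq_eqVlt ltnS lt_min => /orP[/eqP jN|jN] /andP[ye ye'].
  by subst j; exact: He'.
exact: He.
Qed.

Lemma open_wedge_ball_lift (V : set W) i (u : X i) : open V -> V (lift u) ->
  u != x0 i -> exists2 e : R, 0 < e & forall m, mdist (lift u) m < e -> V m.
Proof.
move=> oV Vu ux0; have [e e0 He] : exists2 e : R, 0 < e &
    forall y : X i, mdist u y < e -> V (lift y).
  apply/nbhs_mdist_ballP/open_nbhs_nbhs; split => //.
  exact: (wedge_openP V).1 oV i.
exists (Order.min e (mdist u (x0 i))); first by rewrite lt_min e0 mdist_gt0.
move=> m; rewrite lt_min => /andP[me /mwedge_lift_ball [w mw]].
by move: me; rewrite mw mdist_mwedge_lift; exact: He.
Qed.

Lemma open_wedge_subwedge_ball N (V : set W) (m : M) : open V -> V m ->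
  exists2 e : R, 0 < e & forall m', subwedge N m' -> mdist m m' < e -> V m'.
Proof.
have [i [u ->]] := mwedge_liftP m; have [->|ux0] := eqVneq u (x0 i).
  rewrite mwedge_lift_pt => oV Vpt; have [e e0 He] := open_wedge_ball_pt oV Vpt N.
  exists e => // _ [j [y [jN ->]]].
  by rewrite metric_sym mdist_mwedge_lift_pt metric_sym; exact: He.
move=> oV Vu; have [e e0 He] := open_wedge_ball_lift oV Vu ux0.
by exists e => // m' _; exact: He.
Qed.

Lemma continuous_mwedge_to_wedge (T : topologicalType) (h : T -> M) N :
  continuous h -> (forall t, subwedge N (h t)) ->
  continuous (mwedge_to_wedge \o h).
Proof.
move=> hc hN t U /=; rewrite nbhsE => -[V [oV Vht] VU].
have [e e0 He] := open_wedge_subwedge_ball N oV Vht.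
by apply: filterS (cvgr_dist_lt (hc t) e0) => t' ht'; exact/VU/He.
Qed.

End finite_subwedge.
Arguments subwedge {R X} x0 N.
Arguments mwedge_to_wedge {R X} x0 m.

Section compact_subsets.
Context {R : realType} (X : nat -> metricType R) (x0 : forall i, X i).
Local Notation W := (wedge x0).
Local Notation M := (mwedge x0).
Local Notation pt := (mwedge_pt x0).
Local Notation lift := (mwedge_lift x0).

Lemma open_wedge_setC_lift (S : set nat) (q : forall i, X i) :
  (forall i, S i -> q i != x0 i) ->
  @open W (~` [set lift (q i) | i in S]).
Proof.
move=> qx0; apply/wedge_openP => j; apply: open_mdist => y /= Sy.
have lift_q_idx i (y' : X j) : S i -> lift (q i) = lift y' -> i = j.
  move=> Si qy'; apply/eqP; apply: contraT => ij.
  by have [/eqP] := mwedge_lift_eqNE ij qy'; rewrite (negbTE (qx0 i Si)).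
have [Sj|nSj] := pselect (S j).
  have yq : y != q j by apply: contra_notN Sy => /eqP ->; exists j.
  exists (mdist y (q j)); first by rewrite mdist_gt0.
  move=> y' yy' [i Si qy']; have ij := lift_q_idx _ _ Si qy'; subst i.
  by move: yy'; rewrite (mwedge_lift_inj qy') ltxx.
exists 1 => // y' _ [i Si qy']; have ij := lift_q_idx _ _ Si qy'; subst i.
exact: nSj.
Qed.

Lemma compact_wedge_subwedge (C : set W) : compact C ->
  exists N, C `<=` subwedge x0 N.
Proof.
move=> cC; pose P i := exists2 u : X i, u != x0 i & C (lift u).
have hq i : {q : X i | P i -> q != x0 i /\ C (lift q)}.
  apply: cid; have [[u ux0 Cu]|nPi] := pselect (P i); first by exists u.
  by exists (x0 i).
pose q i := sval (hq i); have qP i : P i -> q i != x0 i /\ C (lift (q i)).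
  exact: svalP (hq i).
pose O n : set W := ~` [set lift (q i) | i in [set i | (n < i)%N /\ P i]].
have [N CON] : exists N, C `<=` O N.
  apply: compact_increasing_cover cC _ _ _.
  - by move=> n; apply: open_wedge_setC_lift => i [_ /qP []].
  - move=> n m nm w Onw [i [mi Pi] qw]; apply: Onw.
    by exists i => //; split => //; exact: leq_ltn_trans nm mi.
  - move=> w Cw; have [i [u wu]] := mwedge_liftP w.
    exists i => // -[i' [ii' /qP [qx0 _]] qw]; rewrite wu in qw.
    have [/eqP] := mwedge_lift_eqNE (negbT (gtn_eqF ii')) qw.
    by rewrite (negbTE qx0).
exists N => w Cw; have [i [u wu]] := mwedge_liftP w.
have [iN|Ni] := leqP i N; first by exists i, u.
have [ux0|ux0] := eqVneq u (x0 i).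
  by rewrite wu ux0 mwedge_lift_pt; exact: subwedge_pt.
have Pi : P i by exists u; rewrite -?wu.
by exfalso; apply: (CON _ (qP i Pi).2); exists i.
Qed.

Lemma compact_mwedge_small_tail (C : set M) (e : R) : compact C -> 0 < e ->
  exists N, forall i (u : X i), (N < i)%N -> C (lift u) -> mdist u (x0 i) < e.
Proof.
move=> cC e0.
pose O n : set M := [set m | mdist m pt < e \/ subwedge x0 n m /\ m != pt].
have [N CON] : exists N, C `<=` O N.
  apply: compact_increasing_cover cC _ _ _.
  - move=> n; apply: open_mdist => m [me|[[j [v [jn ->]]] vpt]].
      exists (e - mdist m pt); first by rewrite subr_gt0.
      move=> m' mm'; left; have := metric_triangle m' m pt.
      rewrite (metric_sym m' m); lra.
    have vx0 : v != x0 j by apply: contra_neq vpt => ->; rewrite mwedge_lift_pt.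
    exists (mdist v (x0 j)); first by rewrite mdist_gt0.
    move=> m' vm'; right; have [w m'w] := mwedge_lift_ball vm'.
    split; first by exists j, w.
    by apply/eqP => m'pt; move: vm'; rewrite m'pt mdist_mwedge_lift_pt ltxx.
  - move=> n n' nn' m [me|[nm mpt]]; [left|right] => //.
    by split => //; exact: subwedgeS nn' _ nm.
  - move=> m _; have [j [v ->]] := mwedge_liftP m.
    have [->|vx0] := eqVneq v (x0 j).
      by exists 0%N => //; left; rewrite mwedge_lift_pt mdistxx.
    exists j => //; right; split; first by exists j, v.
    by apply: contra_neq vx0; rewrite -(mwedge_lift_pt x0 j); exact: mwedge_lift_inj.
exists N => i u Ni /CON [|[[j [v [jN uv]]] upt]].
  by rewrite mdist_mwedge_lift_pt.
have ij : i != j by rewrite gtn_eqF // (leq_ltn_trans jN Ni).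
have [ux0 _] := mwedge_lift_eqNE ij uv.
by rewrite ux0 mwedge_lift_pt eqxx in upt.
Qed.

End compact_subsets.

Section collapse.
Context {R : realType} (X : nat -> metricType R) (x0 : forall i, X i).
Local Notation M := (mwedge x0).
Local Notation pt := (mwedge_pt x0).
Local Notation lift := (mwedge_lift x0).
Variable N : nat.

Definition collapse (m : M) : M := if (N < projT1 (repr m))%N then pt else m.

Lemma collapse_lift i (u : X i) :
  collapse (lift u) = if (N < i)%N then pt else lift u.
Proof.
rewrite /collapse; have [->|ux0] := eqVneq u (x0 i).
  by rewrite mwedge_lift_pt; case: ifP; case: ifP.
by rewrite repr_mwedge_lift.
Qed.

Lemma collapse_pt : collapse pt = pt.
Proof. by rewrite /collapse; case: ifP. Qed.

Lemma collapse_subwedge m : subwedge x0 N (collapse m).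
Proof.
have [i [u ->]] := mwedge_liftP m; rewrite collapse_lift.
by case: ltnP => [_|iN]; [exact: subwedge_pt | exists i, u].
Qed.

Lemma collapse_id m : subwedge x0 N m -> collapse m = m.
Proof. by move=> [i [u [iN ->]]]; rewrite collapse_lift ltnNge iN. Qed.

Lemma collapse_mdist_le m m' : mdist (collapse m) (collapse m') <= mdist m m'.
Proof.
have [i [u ->]] := mwedge_liftP m; have [j [v ->]] := mwedge_liftP m'.
have pt_le k (w : X k) l (y : X l) : (N < k)%N -> ~~ (N < l)%N ->
    mdist pt (lift y) <= mdist (lift w) (lift y).
  move=> Nk Nl; have kl : k != l by apply: contraNneq Nl => <-.
  by rewrite metric_sym mdist_mwedge_lift_pt mdist_mwedge_liftNE // lerDr mdist_ge0.
rewrite !collapse_lift; case: ifP => Ni; case: ifP => Nj.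
- by rewrite mdistxx mdist_ge0.
- by apply: pt_le; rewrite ?Nj.
- by rewrite metric_sym [leRHS]metric_sym; apply: pt_le; rewrite ?Ni.
- exact: lexx.
Qed.

Lemma continuous_collapse : continuous collapse.
Proof. exact/mdist_le_continuous/collapse_mdist_le. Qed.

End collapse.
Arguments collapse {R X} x0 N m.

Lemma wedge_homotopic_of_mwedge {R : realType} (X : nat -> metricType R)
    (x0 : forall i, X i) (K : topologicalType) (k0 : K) (f g : K -> wedge x0) :
  compact [set: K] -> continuous f -> continuous g ->
  @pointed_homotopic R _ _ k0 (mwedge_pt x0)
    (wedge_to_mwedge x0 \o f) (wedge_to_mwedge x0 \o g) ->
  @pointed_homotopic R _ _ k0 (wedge_pt x0) f g.
Proof.
move=> cK fc gc [H [Hc [H0 [H1 Hk0]]]].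
have compact_range (h : K -> wedge x0) : continuous h -> compact (range h).
  by move=> hc; exact: continuous_compact (continuous_subspaceT hc) cK.
have [Nf fN] := compact_wedge_subwedge (compact_range f fc).
have [Ng gN] := compact_wedge_subwedge (compact_range g gc).
pose N := maxn Nf Ng.
exists (mwedge_to_wedge x0 \o (collapse x0 N \o H)); split; [|split; [|split]].
- have cH : {within [set p : K * R | 0 <= p.2 <= 1],
      continuous (collapse x0 N \o H)}.
    by move=> p; apply: continuous_comp (Hc p) _; exact: continuous_collapse.
  exact: continuous_mwedge_to_wedge cH (fun p => collapse_subwedge N (H p)).
- move=> k /=; rewrite H0 collapse_id //.
  exact: subwedgeS (leq_maxl Nf Ng) _ (fN _ (imageT f k)).
- move=> k /=; rewrite H1 collapse_id //.
  exact: subwedgeS (leq_maxr Nf Ng) _ (gN _ (imageT g k)).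
- by move=> t t01 /=; rewrite Hk0 // collapse_pt.
Qed.

Section tail_contraction.
Context {R : realType} (X : nat -> metricType R) (x0 : forall i, X i).
Local Notation M := (mwedge x0).
Local Notation pt := (mwedge_pt x0).
Local Notation lift := (mwedge_lift x0).
Variables (r : R) (Rc : forall i, X i * R -> X i).
Arguments Rc : clear implicits.
Hypothesis r_gt0 : 0 < r.
Hypothesis Rc_contraction : forall i,
  strong_deformation_contraction (x0 i) [set y | mdist y (x0 i) < r] (Rc i).
Variable N : nat.

Lemma contraction_pt i t : 0 <= t <= 1 -> Rc i (x0 i, t) = x0 i.
Proof. by have [_ [_ [_ [_ [+ _]]]]] := Rc_contraction i; apply. Qed.

Lemma contraction0 i (u : X i) : mdist u (x0 i) < r -> Rc i (u, 0) = u.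
Proof. by have [_ [_ [+ _]]] := Rc_contraction i; apply. Qed.

Lemma contraction1 i (u : X i) : mdist u (x0 i) < r -> Rc i (u, 1) = x0 i.
Proof. by have [_ [_ [_ [+ _]]]] := Rc_contraction i; apply. Qed.

Lemma contraction_mdist_pt_le i (u : X i) t : mdist u (x0 i) < r ->
  0 <= t <= 1 -> mdist (Rc i (u, t)) (x0 i) <= mdist u (x0 i).
Proof.
move=> ur t01; have [_ [_ [_ [_ [_ Rc_le]]]]] := Rc_contraction i.
by rewrite -{1}(contraction_pt i t01); apply: Rc_le => //=; rewrite mdistxx.
Qed.

Lemma contraction_near i (u : X i) (t : R) : mdist u (x0 i) < r -> 0 <= t <= 1 ->
  forall e : R, 0 < e -> exists2 d : R, 0 < d &
  exists2 T : set R, nbhs t T & forall (w : X i) t', mdist w (x0 i) < r ->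
    0 <= t' <= 1 -> mdist u w < d -> T t' -> mdist (Rc i (u, t)) (Rc i (w, t')) < e.
Proof.
move=> ur t01 e e0; have [Rc_cont _] := Rc_contraction i.
pose S := [set p : X i * R | mdist p.1 (x0 i) < r /\ 0 <= p.2 <= 1].
have : Rc i @ within S (nbhs (u, t)) --> Rc i (u, t).
  by rewrite nbhs_subspace_in //; exact: Rc_cont.
move=> /cvgr_dist_lt /(_ e e0); rewrite near_withinE => -[[U T] /= [Uu Tt] UT].
have [d d0 Ud] := (nbhs_mdist_ballP _ _).1 Uu; exists d => //; exists T => //.
by move=> w t' wr t'01 uw Tt'; apply: (UT (w, t')); split => //; exact: Ud.
Qed.

Definition small_tail : set M :=
  [set m | forall i (u : X i), (N < i)%N -> m = lift u -> mdist u (x0 i) < r].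

(* [repr] picks an arbitrary summand for the wedge point, which is harmless
   since every [Rc i] fixes [x0 i] *)
Definition contract_tail (t : R) (m : M) : M :=
  let: existT i u := repr m in
  if (N < i)%N then lift (Rc i (u, t)) else lift u.

Lemma contract_tail_lift i (u : X i) t : 0 <= t <= 1 ->
  contract_tail t (lift u) = if (N < i)%N then lift (Rc i (u, t)) else lift u.
Proof.
move=> t01; have [->|ux0] := eqVneq u (x0 i); last first.
  by rewrite /contract_tail repr_mwedge_lift.
rewrite mwedge_lift_pt /contract_tail; have [j ->] := repr_mwedge_pt x0.
by rewrite !contraction_pt // !mwedge_lift_pt !if_same.
Qed.

Lemma contract_tail_pt t : 0 <= t <= 1 -> contract_tail t pt = pt.
Proof.
by move=> t01; rewrite -(mwedge_lift_pt x0 0%N) contract_tail_lift.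
Qed.

Lemma contract_tail0 m : small_tail m -> contract_tail 0 m = m.
Proof.
have [i [u ->]] := mwedge_liftP m => um; rewrite contract_tail_lift ?lexx ?ler01 //.
by case: ifP => // Ni; rewrite contraction0 //; exact: um.
Qed.

Lemma contract_tail1_subwedge m : small_tail m -> subwedge x0 N (contract_tail 1 m).
Proof.
have [i [u ->]] := mwedge_liftP m => um; rewrite contract_tail_lift ?ler01 ?lexx //.
case: ltnP => [Ni|iN]; last by exists i, u.
by rewrite contraction1 ?mwedge_lift_pt; [exact: subwedge_pt | exact: um].
Qed.

Lemma contract_tail_mdist_pt_le t m : small_tail m -> 0 <= t <= 1 ->
  mdist pt (contract_tail t m) <= mdist pt m.
Proof.
have [i [u ->]] := mwedge_liftP m => um t01; rewrite contract_tail_lift //.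
case: ifP => Ni; last exact: lexx.
rewrite ![mdist pt _]metric_sym !mdist_mwedge_lift_pt.
by apply: contraction_mdist_pt_le => //; exact: um.
Qed.

Lemma contract_tail_near m (t : R) : small_tail m -> 0 <= t <= 1 ->
  forall e : R, 0 < e -> exists2 d : R, 0 < d &
  exists2 T : set R, nbhs t T & forall m' t', small_tail m' -> 0 <= t' <= 1 ->
    mdist m m' < d -> T t' -> mdist (contract_tail t m) (contract_tail t' m') < e.
Proof.
have [i [u ->]] := mwedge_liftP m => um t01 e e0.
have [->|ux0] := eqVneq u (x0 i).
  exists e => //; exists setT; first exact: filterT.
  rewrite mwedge_lift_pt => m' t' m't t'01 m'e _.
  rewrite contract_tail_pt //; apply: le_lt_trans m'e.
  exact: contract_tail_mdist_pt_le.
have near_u d : 0 < d -> exists2 d' : R, 0 < d' &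
    forall m', mdist (lift u) m' < d' ->
      exists2 w : X i, m' = lift w & mdist u w < d.
  move=> d0; exists (Order.min d (mdist u (x0 i))).
    by rewrite lt_min d0 mdist_gt0.
  move=> m'; rewrite lt_min => /andP[um' /mwedge_lift_ball [w m'w]].
  by exists w; rewrite // -(mdist_mwedge_lift x0) -m'w.
have [Ni|iN] := ltnP N i.
  have [d d0 [T Tt RcT]] := contraction_near (um i u Ni erefl) t01 e0.
  have [d' d'0 near_d'] := near_u d d0; exists d' => //; exists T => //.
  move=> m' t' m't t'01 /near_d'[w m'w uw] Tt'; subst m'.
  rewrite !contract_tail_lift // Ni mdist_mwedge_lift.
  by apply: RcT => //; exact: m't i w Ni erefl.
have [d' d'0 near_d'] := near_u e e0; exists d' => //.
exists setT; first exact: filterT.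
move=> m' t' _ t'01 /near_d'[w -> uw] _.
by rewrite !contract_tail_lift // ltnNge iN mdist_mwedge_lift.
Qed.

Variables (K : topologicalType) (g : K -> M).
Hypotheses (g_cont : continuous g) (g_tail : forall k, small_tail (g k)).
Arguments g_cont : clear implicits.
Arguments g_tail : clear implicits.

Lemma continuous_contract_tail1 : continuous (contract_tail 1 \o g).
Proof.
move=> k; apply/cvgrPdist_lt => e e0.
have I1 : 0 <= (1 : R) <= 1 by rewrite ler01 lexx.
have [d d0 [T T1 near_d]] := contract_tail_near (g_tail k) I1 e0.
apply: filterS (cvgr_dist_lt (g_cont k) d0) => k' gk'.
by apply: near_d => //; exact: nbhs_singleton T1.
Qed.

Lemma continuous_contract_tail_homotopy :
  {within [set p : K * R | 0 <= p.2 <= 1],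
    continuous (fun p : K * R => contract_tail (1 - p.2) (g p.1))}.
Proof.
set G := fun p : K * R => contract_tail _ _; set I := [set p : K * R | _].
rewrite continuous_subspace_in => -[k s] /set_mem /= s01.
suff : G @ within I (nbhs (k, s)) --> G (k, s) by rewrite nbhs_subspace_in.
apply/cvgrPdist_lt => e e0.
have s'01 : 0 <= 1 - s <= 1.
  by move: s01; rewrite /I /= => /andP[s0 s1]; apply/andP; split; lra.
have [d d0 [T Ts near_d]] := contract_tail_near (g_tail k) s'01 e0.
have /cvgrPdist_lt /(_ d d0) gk := g_cont k.
have T1s : nbhs s [set s' | T (1 - s')].
  have cvg1B : (fun x : R => 1 - x) @ s --> 1 - s.
    exact: (cvgB (cvg_cst (1 : R)) (@cvg_id _ (nbhs s))).
  exact: cvg1B Ts.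
rewrite near_withinE.
exists ([set k' | mdist (g k) (g k') < d], [set s' | T (1 - s')]) => //=.
move=> -[k' s'] /= [gk' Ts'] s'01'; apply: near_d => //.
by move: s'01' => /andP[s0 s1]; apply/andP; split; lra.
Qed.

End tail_contraction.
Arguments small_tail {R X} x0 r N m.
Arguments contract_tail {R X} x0 Rc N t m.

Lemma mwedge_map_homotopic_wedge_map {R : realType} (X : nat -> metricType R)
    (x0 : forall i, X i) (r : R) (K : topologicalType) (k0 : K)
    (g : K -> mwedge x0) : 0 < r ->
  (forall i, exists Ri : X i * R -> X i,
     strong_deformation_contraction (x0 i) [set y | mdist y (x0 i) < r] Ri) ->
  compact [set: K] -> pointed_map k0 (mwedge_pt x0) g ->
  exists2 f : K -> wedge x0, pointed_map k0 (wedge_pt x0) f &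
    @pointed_homotopic R _ _ k0 (mwedge_pt x0) (wedge_to_mwedge x0 \o f) g.
Proof.
move=> r_gt0 hR cK [g_cont g_k0].
pose Rc i := sval (cid (hR i)).
have Rc_contraction i : strong_deformation_contraction (x0 i)
    [set y | mdist y (x0 i) < r] (Rc i) := svalP (cid (hR i)).
have [N gN] := compact_mwedge_small_tail
  (continuous_compact (continuous_subspaceT g_cont) cK) r_gt0.
have g_tail k : small_tail x0 r N (g k).
  by move=> i u Ni gku; apply: gN Ni _; exists k.
have I01 (t : R) : 0 <= t <= 1 -> 0 <= 1 - t <= 1.
  by move=> /andP[t0 t1]; apply/andP; split; lra.
exists (mwedge_to_wedge x0 \o (contract_tail x0 Rc N 1 \o g)).
  split; last by rewrite /= g_k0 (contract_tail_pt Rc_contraction) // lexx ler01.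
  apply: (continuous_mwedge_to_wedge (N := N))
    (continuous_contract_tail1 r_gt0 Rc_contraction g_cont g_tail) _.
  by move=> k; exact (contract_tail1_subwedge Rc_contraction (g_tail k)).
exists (fun p : K * R => contract_tail x0 Rc N (1 - p.2) (g p.1)); split.
  exact (continuous_contract_tail_homotopy r_gt0 Rc_contraction g_cont g_tail).
split; first by move=> k /=; rewrite subr0.
split=> [k|]; first by rewrite /= subrr (contract_tail0 Rc_contraction (g_tail k)).
by move=> t t01 /=; rewrite g_k0 (contract_tail_pt Rc_contraction) // I01.
Qed.

Theorem mainTheorem7 (R : realType) (X : nat -> metricType R)
    (x0 : forall i, X i) (r : R) :
  0 < r ->
  (forall i, exists Ri : X i * R -> X i,
     strong_deformation_contraction (x0 i) [set y | mdist y (x0 i) < r] Ri) ->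
  forall (K : topologicalType) (k0 : K), compact [set: K] ->
  [/\ (forall f : K -> wedge x0, pointed_map k0 (wedge_pt x0) f ->
         pointed_map k0 (mwedge_pt x0) (wedge_to_mwedge x0 \o f)),
      (forall f g : K -> wedge x0,
         pointed_map k0 (wedge_pt x0) f -> pointed_map k0 (wedge_pt x0) g ->
         @pointed_homotopic R _ _ k0 (wedge_pt x0) f g ->
         @pointed_homotopic R _ _ k0 (mwedge_pt x0)
           (wedge_to_mwedge x0 \o f) (wedge_to_mwedge x0 \o g)),
      (forall f g : K -> wedge x0,
         pointed_map k0 (wedge_pt x0) f -> pointed_map k0 (wedge_pt x0) g ->
         @pointed_homotopic R _ _ k0 (mwedge_pt x0)
           (wedge_to_mwedge x0 \o f) (wedge_to_mwedge x0 \o g) ->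
         @pointed_homotopic R _ _ k0 (wedge_pt x0) f g) &
      (forall g : K -> mwedge x0, pointed_map k0 (mwedge_pt x0) g ->
         exists2 f : K -> wedge x0, pointed_map k0 (wedge_pt x0) f &
           @pointed_homotopic R _ _ k0 (mwedge_pt x0)
             (wedge_to_mwedge x0 \o f) g)].
Proof.
move=> r_gt0 hR K k0 cK; split.
- move=> f [f_cont f_k0]; split; last by rewrite /= f_k0.
  move=> k; apply: continuous_comp (f_cont k) _.
  exact: continuous_wedge_to_mwedge.
- move=> f g _ _ [H [H_cont [H0 [H1 H_k0]]]].
  exists (wedge_to_mwedge x0 \o H); split.
    move=> p; apply: continuous_comp (H_cont p) _.
    exact: continuous_wedge_to_mwedge.
  by split; [|split] => [k|k|t t01] /=; rewrite ?H0 ?H1 ?H_k0.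
- by move=> f g [f_cont _] [g_cont _]; exact: wedge_homotopic_of_mwedge.
- by move=> g; exact: mwedge_map_homotopic_wedge_map r_gt0 hR cK.
Qed.
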